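(* Let $C\ge 1$. If there exists a $C$-competitive online algorithm for $\textsc{Strip-Packing}$, then for every $n$ there exists a $4C$-competitive online algorithm for $\textsc{Online-Sorting}[2C,n]$.
   Context: $\textsc{Strip-Packing}$: pieces are convex polygons arriving one at a time; each must be placed irrevocably, by translation only, inside the strip $[0,\infty)\times[0,1]$, interior-disjoint from previously placed pieces, before the next piece is revealed. The cost is the largest $x$-coordinate of a point of a placed piece. An algorithm $\mathcal A$ is $C$-competitive if $\mathcal A(I)\le C\cdot\mathrm{OPT}(I)$ for every instance $I$, where $\mathrm{OPT}(I)$ is the offline optimal cost. $\textsc{Online-Sorting}[\gamma,n]$: an array of $\gamma n$ initially empty cells; a stream of $n$ reals in $[0,1]$ arrives one at a time and each must be placed irrevocably into an empty cell before the next is revealed. With $r_1,\dots,r_n$ the reals in left-to-right order in the array, $r_0:=0$, $r_{n+1}:=1$, the cost is $\sum_{i=0}^n|r_{i+1}-r_i|$; the offline optimum is $1$, and an algorithm is $\Delta$-competitive if its cost is at most $\Delta$ on every stream. *)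

From Stdlib Require Import Reals Lra List.
Import ListNotations.
Open Scope R_scope.

Definition Point := (R * R)%type.

(* A piece is given by a finite list of points; the piece itself is their
   convex hull. *)
Definition Piece := list Point.

Fixpoint sumR (l : list R) : R :=
  match l with nil => 0 | x :: l' => x + sumR l' end.

Definition in_hull (vs : list Point) (p : Point) : Prop :=
  exists ws : list R,
    length ws = length vs /\
    Forall (fun w => 0 <= w) ws /\
    sumR ws = 1 /\
    fst p = sumR (map (fun wv => fst wv * fst (snd wv)) (combine ws vs)) /\
    snd p = sumR (map (fun wv => fst wv * snd (snd wv)) (combine ws vs)).

(* A genuine convex polygon: its hull has nonempty interior, i.e. three
   of its vertices are not collinear. *)
Definition is_polygon (P : Piece) : Prop :=
  exists a b c, In a P /\ In b P /\ In c P /\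
    (fst b - fst a) * (snd c - snd a) - (snd b - snd a) * (fst c - fst a) <> 0.

Definition translate (t : Point) (P : Piece) : Piece :=
  map (fun v => (fst v + fst t, snd v + snd t)) P.

Definition region (P : Piece) (t : Point) : Point -> Prop :=
  in_hull (translate t P).

Definition interior (S : Point -> Prop) (p : Point) : Prop :=
  exists e, 0 < e /\
    forall q, (fst q - fst p)^2 + (snd q - snd p)^2 < e^2 -> S q.

Definition interior_disjoint (S T : Point -> Prop) : Prop :=
  forall p, ~ (interior S p /\ interior T p).

Definition in_strip (S : Point -> Prop) : Prop :=
  forall p, S p -> 0 <= fst p /\ 0 <= snd p <= 1.

Definition valid_piece (P : Piece) : Prop :=
  is_polygon P /\ exists t, in_strip (region P t).

Definition feasible_packing (I : list Piece) (ts : list Point) : Prop :=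
  length ts = length I /\
  forall i, (i < length I)%nat ->
    in_strip (region (nth i I nil) (nth i ts (0,0))) /\
    forall j, (j < i)%nat ->
      interior_disjoint (region (nth j I nil) (nth j ts (0,0)))
                        (region (nth i I nil) (nth i ts (0,0))).

(* largest x-coordinate of a point of P translated by t
   (the maximum over the hull is attained at a vertex) *)
Definition piece_right (P : Piece) (t : Point) : R :=
  fold_right Rmax 0 (map (fun v => fst v + fst t) P).

Definition packing_cost (I : list Piece) (ts : list Point) : R :=
  fold_right Rmax 0 (map (fun Pt => piece_right (fst Pt) (snd Pt)) (combine I ts)).

(* A deterministic online algorithm chooses the translation of the current
   piece from the pieces revealed so far and the current piece. *)
Definition SPAlg := list Piece -> Piece -> Point.

Definition online_placements (A : SPAlg) (I : list Piece) : list Point :=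
  map (fun k => A (firstn k I) (nth k I nil)) (seq 0 (length I)).

Definition SP_competitive (A : SPAlg) (C : R) : Prop :=
  forall I : list Piece, Forall valid_piece I ->
    feasible_packing I (online_placements A I) /\
    forall ts, feasible_packing I ts ->
      packing_cost I (online_placements A I) <= C * packing_cost I ts.

Definition num_cells (gamma : R) (n : nat) : nat :=
  Z.to_nat (Int_part (gamma * INR n)).

(* A deterministic online algorithm picks the cell of the current real from
   the reals revealed so far and the current real. *)
Definition SortAlg := list R -> R -> nat.

Definition sort_cells (B : SortAlg) (xs : list R) : list nat :=
  map (fun k => B (firstn k xs) (nth k xs 0)) (seq 0 (length xs)).

Definition valid_stream (n : nat) (xs : list R) : Prop :=
  length xs = n /\ Forall (fun x => 0 <= x <= 1) xs.

Definition valid_sorting (gamma : R) (n : nat) (B : SortAlg) : Prop :=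
  forall xs, valid_stream n xs ->
    Forall (fun c => (c < num_cells gamma n)%nat) (sort_cells B xs) /\
    NoDup (sort_cells B xs).

(* the reals in left-to-right order of the array with m cells *)
Definition array_contents (m : nat) (cs : list nat) (xs : list R) : list R :=
  concat (map (fun c => map snd (filter (fun p => Nat.eqb (fst p) c) (combine cs xs)))
              (seq 0 m)).

(* sum_{i=0}^{n} |r_{i+1} - r_i| with r_0 = prev (=0), r_{n+1} = 1 *)
Fixpoint tv (prev : R) (l : list R) : R :=
  match l with
  | nil => Rabs (1 - prev)
  | x :: l' => Rabs (x - prev) + tv x l'
  end.

Definition sorting_cost (gamma : R) (n : nat) (B : SortAlg) (xs : list R) : R :=
  tv 0 (array_contents (num_cells gamma n) (sort_cells B xs) xs).

Definition OS_competitive (gamma : R) (n : nat) (B : SortAlg) (Delta : R) : Prop :=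
  valid_sorting gamma n B /\
  forall xs, valid_stream n xs -> sorting_cost gamma n B xs <= Delta.

From Pilot Require Import Defs.
From Stdlib Require Import Reals Lra Lia List Sorted.
Import ListNotations.
Open Scope R_scope.

(* Encode a stream of n reals as the parallelograms with corners (0,0), (1/n,0), (1/n+x,1),
   (x,1).  Sorted by slant they fit side by side in width 2, so the online packing has width at
   most 2C.  Since every piece spans the full height of the strip, two placed pieces with left
   ends a_k <= a_l are separated at both heights: a_k + 1/n <= a_l and
   a_k + x_k + 1/n <= a_l + x_l.  Hence storing x_k in cell floor(n a_k) of the 2Cn cells is
   injective and lists the reals in the order of their pieces, along which the total variation
   telescopes against 2a + x to at most 1 + 2(2C - 1) <= 4C. *)

Definition parallelogram (d x : R) : Piece := [(0,0); (d,0); (d+x,1); (x,1)].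

(* Barycentric weights [(1-v)(1-s), (1-v)s, vs, v(1-s)] reach the point at height [v] and
   relative horizontal offset [s d] along the sheared base. *)
Lemma region_parallelogram d x t p : 0 < d ->
  region (parallelogram d x) t p <->
  0 <= snd p - snd t <= 1 /\ 0 <= fst p - fst t - x * (snd p - snd t) <= d.
Proof.
  intros Hd. destruct t as [a b], p as [u v]; simpl.
  unfold region, in_hull, translate, parallelogram; simpl. split.
  - intros [ws [Hl [Hw [Hs [Hu Hv]]]]].
    destruct ws as [|w0 [|w1 [|w2 [|w3 [|]]]]]; simpl in Hl; try discriminate.
    apply Forall_cons_iff in Hw as [H0 Hw]; apply Forall_cons_iff in Hw as [H1 Hw].
    apply Forall_cons_iff in Hw as [H2 Hw]; apply Forall_cons_iff in Hw as [H3 _].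
    simpl in Hs, Hu, Hv.
    assert (Eu : u - a - x * (v - b) = (w1 + w2) * d) by (rewrite Hu, Hv; nra).
    assert (Ev : v - b = w2 + w3) by (rewrite Hv; nra).
    rewrite Eu, Ev. split; [lra|]. split; [nra|].
    assert (0 <= (1 - (w1 + w2)) * d) by (apply Rmult_le_pos; lra). lra.
  - intros [Hv Hu].
    set (s := (u - a - x * (v - b)) / d).
    assert (Hsd : s * d = u - a - x * (v - b)) by (unfold s; field; lra).
    assert (Hs : 0 <= s <= 1) by (split; apply (Rmult_le_reg_r d); lra).
    clearbody s.
    exists [(1 - (v - b)) * (1 - s); (1 - (v - b)) * s; (v - b) * s; (v - b) * (1 - s)].
    simpl. repeat split.
    + repeat (constructor; [nra|]). constructor.
    + ring.
    + nra.
    + ring.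
Qed.

Lemma interior_region_parallelogram d x t p : 0 < d -> 0 <= x <= 1 ->
  0 < snd p - snd t < 1 -> 0 < fst p - fst t - x * (snd p - snd t) < d ->
  Defs.interior (region (parallelogram d x) t) p.
Proof.
  intros Hd Hx Hv Hu.
  set (v := snd p - snd t) in *; set (u := fst p - fst t - x * v) in *.
  set (e := Rmin (Rmin v (1 - v)) (Rmin u (d - u)) / 2).
  assert (He : 0 < e /\ e <= v / 2 /\ e <= (1 - v) / 2 /\ e <= u / 2 /\ e <= (d - u) / 2).
  { unfold e. pose proof (Rmin_l (Rmin v (1 - v)) (Rmin u (d - u))).
    pose proof (Rmin_r (Rmin v (1 - v)) (Rmin u (d - u))).
    pose proof (Rmin_l v (1 - v)); pose proof (Rmin_r v (1 - v)).
    pose proof (Rmin_l u (d - u)); pose proof (Rmin_r u (d - u)).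
    assert (0 < Rmin (Rmin v (1 - v)) (Rmin u (d - u))) by
      (apply Rmin_glb_lt; apply Rmin_glb_lt; lra).
    lra. }
  exists e. split; [lra|]. intros q Hq. apply region_parallelogram; [lra|].
  pose proof (pow2_ge_0 (fst q - fst p)); pose proof (pow2_ge_0 (snd q - snd p)).
  assert (Hqx : - e < fst q - fst p < e) by (split; nra).
  assert (Hqy : - e < snd q - snd p < e) by (split; nra).
  assert (Hs : - e <= x * (snd q - snd p) <= e) by (split; nra).
  unfold u, v in *. split; split; nra.
Qed.

Lemma interior_disjoint_sym S T : interior_disjoint S T -> interior_disjoint T S.
Proof. intros H p [HT HS]. exact (H p (conj HS HT)). Qed.

Lemma parallelograms_interior_disjoint d x1 x2 t1 t2 : 0 < d ->
  snd t1 = 0 -> snd t2 = 0 -> fst t1 + d <= fst t2 -> x1 <= x2 ->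
  interior_disjoint (region (parallelogram d x1) t1) (region (parallelogram d x2) t2).
Proof.
  intros Hd Hb1 Hb2 Ha Hx p [[e1 [He1 H1]] [e2 [He2 H2]]].
  assert (P2 : region (parallelogram d x2) t2 p).
  { apply H2. rewrite !Rminus_diag. nra. }
  assert (P1 : region (parallelogram d x1) t1 (fst p + e1 / 2, snd p)).
  { apply H1. simpl. rewrite Rminus_diag. replace (fst p + e1 / 2 - fst p) with (e1 / 2) by ring.
    nra. }
  apply region_parallelogram in P1, P2; try lra. simpl in P1.
  rewrite Hb1 in P1; rewrite Hb2 in P2.
  assert (x1 * (snd p - 0) <= x2 * (snd p - 0)) by nra.
  lra.
Qed.

(* The two sheared strips of width [d] cross the line [y = q] in intervals starting at
   [fst t + x q]; if these starts are less than [d] apart the interiors meet. *)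
Lemma parallelograms_overlap d x1 x2 t1 t2 q : 0 < d -> 0 <= x1 <= 1 -> 0 <= x2 <= 1 ->
  snd t1 = 0 -> snd t2 = 0 -> 0 < q < 1 ->
  - d < (fst t2 + x2 * q) - (fst t1 + x1 * q) < d ->
  ~ interior_disjoint (region (parallelogram d x1) t1) (region (parallelogram d x2) t2).
Proof.
  intros Hd Hx1 Hx2 Hb1 Hb2 Hq Hg H.
  apply (H (((fst t1 + x1 * q) + (fst t2 + x2 * q) + d) / 2, q)).
  split; apply interior_region_parallelogram; simpl; rewrite ?Hb1, ?Hb2; lra.
Qed.

Lemma affine_meets_band d g b : 0 < d -> 0 <= g -> ~ (d <= g /\ d <= g + b) ->
  exists q, 0 < q < 1 /\ - d < g + b * q < d.
Proof.
  intros Hd Hg H. destruct (Rlt_or_le g d) as [Hgd|Hgd].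
  - set (q := Rmin (1 / 2) ((d - g) / (2 * (Rabs b + 1)))).
    pose proof (Rabs_pos b).
    assert (Hq0 : 0 < q) by (apply Rmin_glb_lt; [lra|]; apply Rdiv_lt_0_compat; lra).
    assert (Hq1 : q <= 1 / 2) by apply Rmin_l.
    assert (Hqb : q * (2 * (Rabs b + 1)) <= d - g).
    { pose proof (Rmin_r (1 / 2) ((d - g) / (2 * (Rabs b + 1)))) as Hr. fold q in Hr.
      apply (Rmult_le_compat_r (2 * (Rabs b + 1))) in Hr; [|lra].
      unfold Rdiv in Hr. rewrite Rmult_assoc, Rinv_l, Rmult_1_r in Hr; lra. }
    assert (Hbq : Rabs (b * q) < d - g).
    { rewrite Rabs_mult, (Rabs_right q) by lra. nra. }
    apply Rabs_def2 in Hbq. exists q. split; split; lra.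
  - assert (Hb : g + b < d) by lra.
    set (v := (Rmax (g + b) (- d) + d) / 2).
    assert (Hv : g + b < v < d /\ - d < v).
    { unfold v. destruct (Rle_or_lt (g + b) (- d)).
      - rewrite Rmax_right by lra. lra.
      - rewrite Rmax_left by lra. lra. }
    exists ((g - v) / - b).
    assert (Hq : (g - v) / - b * - b = g - v) by (field; lra).
    set (q := (g - v) / - b) in *.
    assert (0 < q) by nra. split; split; nra.
Qed.

Lemma parallelograms_separated d x1 x2 t1 t2 : 0 < d -> 0 <= x1 <= 1 -> 0 <= x2 <= 1 ->
  snd t1 = 0 -> snd t2 = 0 -> fst t1 <= fst t2 ->
  interior_disjoint (region (parallelogram d x1) t1) (region (parallelogram d x2) t2) ->
  fst t1 + d <= fst t2 /\ fst t1 + x1 + d <= fst t2 + x2.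
Proof.
  intros Hd Hx1 Hx2 Hb1 Hb2 Ha H.
  destruct (Rle_dec (fst t1 + d) (fst t2)), (Rle_dec (fst t1 + x1 + d) (fst t2 + x2));
    try (split; assumption); exfalso;
  destruct (affine_meets_band d (fst t2 - fst t1) (x2 - x1)) as [q [Hq Hg]]; try lra;
  apply (parallelograms_overlap d x1 x2 t1 t2 q); auto; nra.
Qed.

Lemma in_strip_parallelogram d x t : 0 < d -> 0 <= x <= 1 ->
  in_strip (region (parallelogram d x) t) <-> snd t = 0 /\ 0 <= fst t.
Proof.
  intros Hd Hx. split.
  - intros H.
    assert (Hlo : region (parallelogram d x) t t) by
      (apply region_parallelogram; [|rewrite !Rminus_diag]; lra).
    assert (Hhi : region (parallelogram d x) t (fst t + x, snd t + 1)) by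
      (apply region_parallelogram; simpl; lra).
    apply H in Hlo, Hhi. simpl in Hhi. lra.
  - intros [Hb Ha] p Hp. apply region_parallelogram in Hp; [|lra].
    rewrite Hb in Hp. assert (0 <= x * (snd p - 0)) by nra. lra.
Qed.

Lemma valid_parallelogram d x : 0 < d -> 0 <= x <= 1 -> valid_piece (parallelogram d x).
Proof.
  intros Hd Hx. split.
  - exists (0,0), (d,0), (x,1). simpl. repeat split; auto 10. lra.
  - exists (0,0). apply in_strip_parallelogram; simpl; lra.
Qed.

Lemma fold_Rmax_ge y l : In y l -> y <= fold_right Rmax 0 l.
Proof.
  induction l as [|z l IH]; simpl; [tauto|].
  intros [->|H]; [apply Rmax_l|]. eapply Rle_trans; [apply IH, H|apply Rmax_r].
Qed.

Lemma fold_Rmax_le M l : 0 <= M -> (forall y, In y l -> y <= M) -> fold_right Rmax 0 l <= M.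
Proof.
  intros HM. induction l as [|z l IH]; simpl; intros H; [exact HM|].
  apply Rmax_lub; auto.
Qed.

Lemma piece_right_parallelogram d x t : 0 <= d -> 0 <= x -> 0 <= fst t ->
  piece_right (parallelogram d x) t = fst t + d + x.
Proof.
  intros Hd Hx Ht. apply Rle_antisym.
  - apply fold_Rmax_le; [lra|]. simpl. intros y Hy. repeat destruct Hy as [<-|Hy]; lra.
  - replace (fst t + d + x) with (d + x + fst t) by ring.
    apply fold_Rmax_ge. simpl. auto.
Qed.

Lemma packing_cost_ge I ts k : length ts = length I -> (k < length I)%nat ->
  piece_right (nth k I nil) (nth k ts (0,0)) <= packing_cost I ts.
Proof.
  intros Hl Hk. apply fold_Rmax_ge, in_map_iff.
  exists (nth k I nil, nth k ts (0,0)). split; [reflexivity|].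
  rewrite <- combine_nth by auto. apply nth_In.
  rewrite length_combine. unfold Piece, Point in *. lia.
Qed.

Lemma packing_cost_le I ts M : length ts = length I -> 0 <= M ->
  (forall k, (k < length I)%nat -> piece_right (nth k I nil) (nth k ts (0,0)) <= M) ->
  packing_cost I ts <= M.
Proof.
  intros Hl HM H. apply fold_Rmax_le; [exact HM|]. intros y Hy.
  apply in_map_iff in Hy as [Pt [<- HPt]].
  apply (In_nth _ _ (nil, (0,0))) in HPt as [k [Hk <-]].
  rewrite length_combine in Hk. rewrite combine_nth by auto.
  apply H. unfold Piece, Point in *. lia.
Qed.

Section Ranking.

Variable X : nat -> R.

(* Ties in [X] are broken by index, so that [precedes] is a strict total order. *)
Definition precedes (l k : nat) : bool :=
  if Rlt_dec (X l) (X k) then true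
  else if Req_EM_T (X l) (X k) then Nat.ltb l k else false.

Lemma precedes_spec l k : precedes l k = true <-> X l < X k \/ X l = X k /\ (l < k)%nat.
Proof.
  unfold precedes. destruct (Rlt_dec (X l) (X k)); [tauto|].
  destruct (Req_EM_T (X l) (X k)).
  - rewrite Nat.ltb_lt. split; [tauto|]. intros [H|H]; [lra|tauto].
  - split; [discriminate|]. intros [H|H]; lra.
Qed.

Lemma precedes_irrefl k : precedes k k = false.
Proof.
  destruct (precedes k k) eqn:E; [|reflexivity].
  apply precedes_spec in E as [E|[_ E]]; [lra|lia].
Qed.

Lemma precedes_trans j k l : precedes j k = true -> precedes k l = true -> precedes j l = true.
Proof.
  rewrite !precedes_spec. intros [H|[H H']] [G|[G G']]; (left; lra) || (right; split; [lra|lia]).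
Qed.

Lemma precedes_total k l : k <> l -> precedes k l = true \/ precedes l k = true.
Proof.
  intros H. rewrite !precedes_spec.
  destruct (Rtotal_order (X k) (X l)) as [E|[E|E]]; [tauto| |tauto].
  destruct (Nat.lt_gt_cases k l) as [[G|G] _]; auto.
Qed.

Definition rank (n k : nat) : nat := length (filter (fun l => precedes l k) (seq 0 n)).

Lemma rank_lt n k : (k < n)%nat -> (rank n k < n)%nat.
Proof.
  intros Hk. unfold rank.
  pose proof (filter_length (fun l => precedes l k) (seq 0 n)) as E. rewrite length_seq in E.
  enough (In k (filter (fun l => negb (precedes l k)) (seq 0 n))) as Hin.
  { destruct (filter (fun l => negb (precedes l k)) (seq 0 n)); [destruct Hin|simpl in E; lia]. }
  apply filter_In. rewrite in_seq, precedes_irrefl. split; [lia|reflexivity].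
Qed.

Lemma rank_lt_rank n k l : (k < n)%nat -> precedes k l = true -> (rank n k < rank n l)%nat.
Proof.
  intros Hk Hkl. unfold rank.
  apply (NoDup_incl_length (l := k :: filter (fun j => precedes j k) (seq 0 n))).
  - constructor; [|apply NoDup_filter, seq_NoDup].
    rewrite filter_In, precedes_irrefl. intros [_ H]; discriminate.
  - intros j [<-|Hj]; apply filter_In.
    + rewrite in_seq. split; [lia|exact Hkl].
    + apply filter_In in Hj as [Hj Hjk]. split; [exact Hj|].
      exact (precedes_trans j k l Hjk Hkl).
Qed.

End Ranking.

Definition sorting_piece (n : nat) (x : R) : Piece := parallelogram (/ INR n) x.

Lemma nth_map_seq {A} (f : nat -> A) n k d : (k < n)%nat -> nth k (map f (seq 0 n)) d = f k.
Proof.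
  intros Hk. rewrite (nth_indep _ d (f 0%nat)) by (rewrite length_map, length_seq; exact Hk).
  rewrite map_nth, seq_nth; auto.
Qed.

Lemma nth_sorting_pieces n xs k : (k < length xs)%nat ->
  nth k (map (sorting_piece n) xs) nil = sorting_piece n (nth k xs 0).
Proof.
  intros Hk. rewrite (nth_indep _ nil (sorting_piece n 0)) by (rewrite length_map; exact Hk).
  apply map_nth.
Qed.

Lemma INR_lt_mul_le i j d : (i < j)%nat -> 0 <= d -> INR i * d + d <= INR j * d.
Proof.
  intros Hij Hd. assert (INR i + 1 <= INR j) by (rewrite <- S_INR; apply le_INR; lia).
  nra.
Qed.

Section SortedPacking.

Variables (n : nat) (xs : list R).
Hypothesis Hn : (0 < n)%nat.
Hypothesis Hxs : valid_stream n xs.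

(* Sorting the pieces by their slant and laying them side by side packs them into
   width [n * (1/n) + max slant <= 2]. *)
Definition sorted_packing : list Point :=
  map (fun k => (INR (rank (fun j => nth j xs 0) n k) * / INR n, 0)) (seq 0 n).

Let Hd : 0 < / INR n.
Proof. apply Rinv_0_lt_compat, lt_0_INR, Hn. Qed.

Let in_unit k : (k < n)%nat -> 0 <= nth k xs 0 <= 1.
Proof.
  destruct Hxs as [Hl Hx]. intros Hk. rewrite Forall_nth in Hx. apply Hx. lia.
Qed.

Let nth_sorted_packing k : (k < n)%nat ->
  nth k sorted_packing (0,0) = (INR (rank (fun j => nth j xs 0) n k) * / INR n, 0).
Proof.
  exact (nth_map_seq (fun j => (INR (rank (fun i => nth i xs 0) n j) * / INR n, 0)) n k (0,0)).
Qed.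

Let position_bounds k : (k < n)%nat ->
  0 <= INR (rank (fun j => nth j xs 0) n k) * / INR n /\
  INR (rank (fun j => nth j xs 0) n k) * / INR n + / INR n <= 1.
Proof.
  intros Hk. split; [apply Rmult_le_pos; [apply pos_INR|lra]|].
  replace 1 with (INR n * / INR n) by (field; apply not_0_INR; lia).
  apply INR_lt_mul_le; [apply rank_lt; exact Hk|lra].
Qed.

Lemma sorted_packing_feasible : feasible_packing (map (sorting_piece n) xs) sorted_packing.
Proof.
  destruct Hxs as [Hl _].
  split; [unfold sorted_packing; rewrite !length_map, length_seq; auto|].
  rewrite length_map, Hl. intros i Hi.
  rewrite nth_sorting_pieces, nth_sorted_packing by lia.
  split; [apply in_strip_parallelogram; simpl; auto; split; [auto|apply position_bounds, Hi]|].
  intros j Hj. rewrite nth_sorting_pieces, nth_sorted_packing by lia. unfold sorting_piece.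
  destruct (precedes_total (fun k => nth k xs 0) j i) as [E|E]; [lia| |].
  - apply parallelograms_interior_disjoint; simpl; auto.
    + apply INR_lt_mul_le; [apply rank_lt_rank; auto; lia|lra].
    + apply precedes_spec in E as [E|[E _]]; lra.
  - apply interior_disjoint_sym, parallelograms_interior_disjoint; simpl; auto.
    + apply INR_lt_mul_le; [apply rank_lt_rank; auto|lra].
    + apply precedes_spec in E as [E|[E _]]; lra.
Qed.

Lemma sorted_packing_cost : packing_cost (map (sorting_piece n) xs) sorted_packing <= 2.
Proof.
  destruct Hxs as [Hl _].
  apply packing_cost_le; [unfold sorted_packing; rewrite !length_map, length_seq; auto|lra|].
  rewrite length_map, Hl. intros k Hk.
  rewrite nth_sorting_pieces, nth_sorted_packing by lia.
  pose proof (in_unit k Hk). pose proof (position_bounds k Hk).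
  unfold sorting_piece. rewrite piece_right_parallelogram; simpl; lra.
Qed.

End SortedPacking.

Lemma StronglySorted_app {A} (Rel : A -> A -> Prop) l1 l2 :
  StronglySorted Rel l1 -> StronglySorted Rel l2 ->
  (forall x y, In x l1 -> In y l2 -> Rel x y) -> StronglySorted Rel (l1 ++ l2).
Proof.
  induction l1 as [|x l1 IH]; simpl; intros H1 H2 H; [exact H2|].
  apply StronglySorted_inv in H1 as [H1 Hx]. constructor.
  - apply IH; auto.
  - apply Forall_app. split; [exact Hx|]. apply Forall_forall. auto.
Qed.

Lemma Sorted_of_StronglySorted_on {A} (Rel Rel' : A -> A -> Prop) (P : A -> Prop) l :
  (forall x y, P x -> P y -> Rel x y -> Rel' x y) ->
  Forall P l -> StronglySorted Rel l -> Sorted Rel' l.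
Proof.
  intros H. induction l as [|x l IH]; intros HP HS; constructor.
  - apply Forall_cons_iff in HP as [_ HP]. apply StronglySorted_inv in HS as [HS _]. auto.
  - destruct l as [|y l]; constructor.
    apply Forall_cons_iff in HP as [Px HP]. apply Forall_cons_iff in HP as [Py _].
    apply StronglySorted_inv in HS as [_ HS]. apply Forall_cons_iff in HS as [Hxy _]. auto.
Qed.

Definition indices_by_cell (c : nat -> nat) (n m : nat) : list nat :=
  concat (map (fun j => filter (fun k => Nat.eqb (c k) j) (seq 0 n)) (seq 0 m)).

Lemma combine_cells (c : nat -> nat) (xs : list R) :
  combine (map c (seq 0 (length xs))) xs =
  map (fun k => (c k, nth k xs 0)) (seq 0 (length xs)).
Proof.
  apply nth_ext with (d := (0%nat, 0)) (d' := (0%nat, 0)).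
  - rewrite length_combine, !length_map, length_seq. lia.
  - intros k Hk. rewrite length_combine, length_map, length_seq in Hk.
    rewrite combine_nth by (rewrite length_map, length_seq; reflexivity).
    rewrite !nth_map_seq by lia. reflexivity.
Qed.

Lemma array_contents_by_cell c xs m :
  array_contents m (map c (seq 0 (length xs))) xs =
  map (fun k => nth k xs 0) (indices_by_cell c (length xs) m).
Proof.
  unfold array_contents, indices_by_cell. rewrite combine_cells, concat_map, map_map.
  f_equal. apply map_ext. intros j. rewrite filter_map_swap, map_map. reflexivity.
Qed.

Lemma In_indices_by_cell c n m k :
  In k (indices_by_cell c n m) <-> (k < n)%nat /\ (c k < m)%nat.
Proof.
  unfold indices_by_cell. rewrite in_concat. split.
  - intros [l [Hl Hk]]. apply in_map_iff in Hl as [j [<- Hj]].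
    apply filter_In in Hk as [Hk Hc]. apply Nat.eqb_eq in Hc. apply in_seq in Hj, Hk. lia.
  - intros [Hk Hc]. exists (filter (fun k' => Nat.eqb (c k') (c k)) (seq 0 n)). split.
    + apply in_map_iff. exists (c k). split; [reflexivity|]. apply in_seq. lia.
    + apply filter_In. rewrite in_seq, Nat.eqb_refl. split; [lia|reflexivity].
Qed.

Section InjectiveCells.

Variables (c : nat -> nat) (n : nat).
Hypothesis c_inj : forall k l, (k < n)%nat -> (l < n)%nat -> c k = c l -> k = l.

Let cell_sorted j : StronglySorted (fun k l => (c k < c l)%nat)
  (filter (fun k => Nat.eqb (c k) j) (seq 0 n)).
Proof.
  assert (Hsub : forall k, In k (seq 0 n) -> (k < n)%nat) by (intros k Hk; apply in_seq in Hk; lia).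
  pose proof (seq_NoDup n 0) as Hnd. revert Hsub Hnd. generalize (seq 0 n) as s.
  induction s as [|k s IH]; simpl; intros Hsub Hnd; [constructor|].
  apply NoDup_cons_iff in Hnd as [Hk Hnd].
  specialize (IH (fun l Hl => Hsub l (or_intror Hl)) Hnd).
  destruct (Nat.eqb (c k) j) eqn:E; [|exact IH]. constructor; [exact IH|].
  apply Forall_forall. intros l Hl. apply filter_In in Hl as [Hl El]. exfalso.
  apply Nat.eqb_eq in E, El. apply Hk.
  replace k with l; [exact Hl|]. apply c_inj; auto; lia.
Qed.

Lemma indices_by_cell_sorted m :
  StronglySorted (fun k l => (c k < c l)%nat) (indices_by_cell c n m).
Proof.
  induction m as [|m IH]; [constructor|].
  unfold indices_by_cell. rewrite seq_S, map_app, concat_app. simpl. rewrite app_nil_r.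
  apply StronglySorted_app; [exact IH|apply cell_sorted|].
  intros k l Hk Hl. apply In_indices_by_cell in Hk.
  apply filter_In in Hl as [_ Hl]. apply Nat.eqb_eq in Hl. lia.
Qed.

End InjectiveCells.

(* For separated neighbours [|X l - X k| <= (2 a l + X l) - (2 a k + X k) - 2 d],
   so the total variation telescopes. *)
Lemma tv_le_of_separated (X a : nat -> R) (d M : R) k0 K :
  Sorted (fun k l => a k + d <= a l /\ a k + X k + d <= a l + X l) (k0 :: K) ->
  Forall (fun k => 0 <= X k <= 1 /\ a k + X k + d <= M) (k0 :: K) ->
  tv (X k0) (map X K) <= 1 - X k0 + 2 * (M - d - a k0 - INR (length K) * d).
Proof.
  revert k0. induction K as [|k1 K IH]; intros k0 HS HF; cbn [tv map length].
  - apply Forall_cons_iff in HF as [[Hx Hb] _].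
    rewrite Rabs_right by lra. simpl. lra.
  - apply Sorted_inv in HS as [HS Hhd]. apply HdRel_inv in Hhd as [Ha Hax].
    apply Forall_cons_iff in HF as [[Hx0 _] HF].
    specialize (IH k1 HS HF).
    apply Forall_cons_iff in HF as [[Hx1 _] _].
    rewrite S_INR. destruct (Rle_or_lt (X k0) (X k1)).
    + rewrite Rabs_right by lra. lra.
    + rewrite Rabs_left by lra. lra.
Qed.

Lemma tv_from_zero_le (X a : nat -> R) (d M : R) K : 0 <= M ->
  Sorted (fun k l => a k + d <= a l /\ a k + X k + d <= a l + X l) K ->
  Forall (fun k => 0 <= a k /\ 0 <= X k <= 1 /\ a k + X k + d <= M) K ->
  tv 0 (map X K) <= 1 + 2 * (M - INR (length K) * d).
Proof.
  intros HM HS HF. destruct K as [|k0 K]; cbn [tv map length].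
  - rewrite Rminus_0_r, Rmult_0_l, Rabs_right; lra.
  - pose proof (tv_le_of_separated X a d M k0 K HS
      (Forall_impl _ (fun k Hk => proj2 Hk) HF)) as HT.
    apply Forall_cons_iff in HF as [[Ha [Hx _]] _].
    rewrite Rminus_0_r, Rabs_right, S_INR by lra. lra.
Qed.

Lemma floor_nat_lt y z : 0 <= y -> y + 1 <= z ->
  (Z.to_nat (Int_part y) < Z.to_nat (Int_part z))%nat.
Proof.
  intros Hy Hz. destruct (base_Int_part y) as [Hy1 Hy2], (base_Int_part z) as [Hz1 Hz2].
  assert ((-1 < Int_part y)%Z) by (apply lt_IZR; simpl; lra).
  assert ((Int_part y < Int_part z)%Z) by (apply lt_IZR; lra).
  lia.
Qed.

Section PackingSorter.

Variables (A : SPAlg) (C : R) (n : nat).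
Hypothesis HC : 1 <= C.
Hypothesis HA : SP_competitive A C.
Hypothesis Hn : (0 < n)%nat.

Definition packing_sorter : SortAlg := fun pre x =>
  Z.to_nat (Int_part (INR n * fst (A (map (sorting_piece n) pre) (sorting_piece n x)))).

Let Hd : 0 < / INR n.
Proof. apply Rinv_0_lt_compat, lt_0_INR, Hn. Qed.

Let Hn_inv : INR n * / INR n = 1.
Proof. apply Rinv_r, not_0_INR. lia. Qed.

Definition online_placement (xs : list R) (k : nat) : Point :=
  A (map (sorting_piece n) (firstn k xs)) (sorting_piece n (nth k xs 0)).

Definition online_cell (xs : list R) (k : nat) : nat :=
  Z.to_nat (Int_part (INR n * fst (online_placement xs k))).

Section Stream.

Variable xs : list R.
Hypothesis Hxs : valid_stream n xs.

Local Notation I := (map (sorting_piece n) xs).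
Local Notation X k := (nth k xs 0).
Local Notation a k := (fst (online_placement xs k)).

Let in_unit k : (k < n)%nat -> 0 <= X k <= 1.
Proof.
  destruct Hxs as [Hl Hx]. intros Hk. rewrite Forall_nth in Hx. apply Hx. lia.
Qed.

Let nth_pieces k : (k < n)%nat -> nth k I nil = sorting_piece n (X k).
Proof. intros Hk. apply nth_sorting_pieces. rewrite (proj1 Hxs). exact Hk. Qed.

Let nth_online_placements k : (k < n)%nat ->
  nth k (online_placements A I) (0,0) = online_placement xs k.
Proof.
  destruct Hxs as [Hl _]. intros Hk. unfold online_placements.
  rewrite length_map, nth_map_seq, firstn_map, nth_pieces by lia. reflexivity.
Qed.

Let online_packing :
  feasible_packing I (online_placements A I) /\ packing_cost I (online_placements A I) <= 2 * C.
Proof.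
  destruct Hxs as [Hl Hx].
  assert (Hvalid : Forall valid_piece I).
  { apply Forall_map. eapply Forall_impl; [|exact Hx]. intros x Hx'.
    apply valid_parallelogram; assumption. }
  destruct (HA _ Hvalid) as [Hfeas Hcomp]. split; [exact Hfeas|].
  pose proof (sorted_packing_cost n xs Hn Hxs).
  pose proof (Hcomp _ (sorted_packing_feasible n xs Hn Hxs)). nra.
Qed.

Let online_feasible k : (k < n)%nat ->
  in_strip (region (sorting_piece n (X k)) (online_placement xs k)) /\
  forall j, (j < k)%nat ->
    interior_disjoint (region (sorting_piece n (X j)) (online_placement xs j))
                      (region (sorting_piece n (X k)) (online_placement xs k)).
Proof.
  intros Hk. destruct online_packing as [[_ Hfeas] _].
  rewrite length_map, (proj1 Hxs) in Hfeas.
  destruct (Hfeas k Hk) as [Hs Hdisj].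
  rewrite nth_pieces, nth_online_placements in Hs, Hdisj by exact Hk.
  split; [exact Hs|]. intros j Hj. specialize (Hdisj j Hj).
  rewrite nth_pieces, nth_online_placements in Hdisj by lia. exact Hdisj.
Qed.

Let placed_on_floor k : (k < n)%nat -> snd (online_placement xs k) = 0 /\ 0 <= a k.
Proof.
  intros Hk. apply (in_strip_parallelogram (/ INR n) (X k)); [exact Hd|apply in_unit, Hk|].
  apply online_feasible, Hk.
Qed.

Lemma online_offset_bounds k : (k < n)%nat -> 0 <= a k /\ a k + X k + / INR n <= 2 * C.
Proof.
  intros Hk. destruct (placed_on_floor k Hk) as [_ Ha]. pose proof (in_unit k Hk).
  split; [exact Ha|].
  destruct online_packing as [[Hl _] Hcost].
  pose proof (packing_cost_ge _ _ k Hl) as Hright.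
  rewrite length_map, (proj1 Hxs), nth_pieces, nth_online_placements in Hright by exact Hk.
  assert (E : piece_right (sorting_piece n (X k)) (online_placement xs k) = a k + / INR n + X k)
    by (apply piece_right_parallelogram; lra).
  rewrite E in Hright. specialize (Hright Hk). lra.
Qed.

Lemma online_offsets_separated k l : (k < n)%nat -> (l < n)%nat -> k <> l -> a k <= a l ->
  a k + / INR n <= a l /\ a k + X k + / INR n <= a l + X l.
Proof.
  intros Hk Hl Hkl Hle.
  apply parallelograms_separated; try apply in_unit; try apply placed_on_floor; auto.
  destruct (Nat.lt_gt_cases k l) as [[H|H] _]; [exact Hkl| |].
  - apply (online_feasible l Hl), H.
  - apply interior_disjoint_sym, (online_feasible k Hk), H.
Qed.

Let cell_lt_of_separated k l : (k < n)%nat -> a k + / INR n <= a l ->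
  (online_cell xs k < online_cell xs l)%nat.
Proof.
  intros Hk H. apply floor_nat_lt.
  - apply Rmult_le_pos; [apply pos_INR|apply online_offset_bounds, Hk].
  - rewrite <- Hn_inv. pose proof (pos_INR n). nra.
Qed.

Lemma online_cell_lt_num_cells k : (k < n)%nat -> (online_cell xs k < num_cells (2 * C) n)%nat.
Proof.
  intros Hk. destruct (online_offset_bounds k Hk) as [Ha Hb]. pose proof (in_unit k Hk).
  apply floor_nat_lt.
  - apply Rmult_le_pos; [apply pos_INR|exact Ha].
  - rewrite <- Hn_inv. pose proof (pos_INR n). nra.
Qed.

Lemma separated_of_online_cell_lt k l : (k < n)%nat -> (l < n)%nat ->
  (online_cell xs k < online_cell xs l)%nat ->
  a k + / INR n <= a l /\ a k + X k + / INR n <= a l + X l.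
Proof.
  intros Hk Hl Hc. destruct (Nat.eq_dec k l) as [->|Hkl]; [lia|].
  destruct (Rle_or_lt (a k) (a l)) as [Hle|Hlt]; [apply online_offsets_separated; auto|].
  destruct (online_offsets_separated l k Hl Hk (not_eq_sym Hkl) (Rlt_le _ _ Hlt)) as [H _].
  pose proof (cell_lt_of_separated l k Hl H). lia.
Qed.

Lemma online_cell_inj k l : (k < n)%nat -> (l < n)%nat ->
  online_cell xs k = online_cell xs l -> k = l.
Proof.
  intros Hk Hl Hc. destruct (Nat.eq_dec k l) as [|Hkl]; [assumption|exfalso].
  destruct (Rle_or_lt (a k) (a l)) as [Hle|Hlt].
  - destruct (online_offsets_separated k l Hk Hl Hkl Hle) as [H _].
    pose proof (cell_lt_of_separated k l Hk H). lia.
  - destruct (online_offsets_separated l k Hl Hk (not_eq_sym Hkl) (Rlt_le _ _ Hlt)) as [H _].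
    pose proof (cell_lt_of_separated l k Hl H). lia.
Qed.

Let sort_cells_packing_sorter : sort_cells packing_sorter xs = map (online_cell xs) (seq 0 n).
Proof. rewrite <- (proj1 Hxs). reflexivity. Qed.

Lemma packing_sorter_valid :
  Forall (fun c => (c < num_cells (2 * C) n)%nat) (sort_cells packing_sorter xs) /\
  NoDup (sort_cells packing_sorter xs).
Proof.
  rewrite sort_cells_packing_sorter. split.
  - apply Forall_map, Forall_forall. intros k Hk. apply in_seq in Hk.
    apply online_cell_lt_num_cells. lia.
  - apply NoDup_map_NoDup_ForallPairs; [|apply seq_NoDup].
    intros k l Hk Hl. apply in_seq in Hk, Hl. apply online_cell_inj; lia.
Qed.

Lemma packing_sorter_cost : sorting_cost (2 * C) n packing_sorter xs <= 4 * C.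
Proof.
  unfold sorting_cost. rewrite sort_cells_packing_sorter.
  set (K := indices_by_cell (online_cell xs) n (num_cells (2 * C) n)).
  assert (HK : forall k, In k K <-> (k < n)%nat).
  { intros k. unfold K. rewrite In_indices_by_cell.
    split; [tauto|]. intros Hk. split; [exact Hk|apply online_cell_lt_num_cells, Hk]. }
  assert (Hlen : (n <= length K)%nat).
  { rewrite <- (length_seq n 0). apply NoDup_incl_length; [apply seq_NoDup|].
    intros k Hk. apply HK. apply in_seq in Hk. lia. }
  assert (HF : Forall (fun k => (k < n)%nat) K) by (apply Forall_forall; apply HK).
  assert (Htv : tv 0 (map (fun k => X k) K) <= 1 + 2 * (2 * C - INR (length K) * / INR n)).
  { apply tv_from_zero_le with (a := fun k => a k); [lra| |].
    - apply (Sorted_of_StronglySorted_on (fun k l => (online_cell xs k < online_cell xs l)%nat) _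
        (fun k => (k < n)%nat)); [|exact HF|].
      + intros k l Hk Hl. apply separated_of_online_cell_lt; assumption.
      + apply indices_by_cell_sorted. exact online_cell_inj.
    - eapply Forall_impl; [|exact HF]. intros k Hk.
      pose proof (online_offset_bounds k Hk). pose proof (in_unit k Hk). lra. }
  assert (Hfill : 1 <= INR (length K) * / INR n).
  { rewrite <- Hn_inv. apply Rmult_le_compat_r; [lra|apply le_INR, Hlen]. }
  rewrite <- (proj1 Hxs), array_contents_by_cell, (proj1 Hxs). fold K. lra.
Qed.

End Stream.

Lemma packing_sorter_competitive : OS_competitive (2 * C) n packing_sorter (4 * C).
Proof.
  split; intros xs Hxs; [apply packing_sorter_valid | apply packing_sorter_cost]; exact Hxs.
Qed.

End PackingSorter.

Lemma OS_competitive_empty gamma B Delta : 1 <= Delta -> OS_competitive gamma 0 B Delta.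
Proof.
  intros HD. split; intros xs [Hl _]; destruct xs; try discriminate.
  - split; constructor.
  - unfold sorting_cost, array_contents. simpl.
    replace (concat _) with (@nil R).
    + simpl. rewrite Rminus_0_r, Rabs_R1. exact HD.
    + symmetry. apply concat_nil_Forall, Forall_map, Forall_forall. reflexivity.
Qed.

Theorem lemma7 (C : R) (HC : 1 <= C) :
  (exists A : SPAlg, SP_competitive A C) ->
  forall n : nat, exists B : SortAlg, OS_competitive (2 * C) n B (4 * C).
Proof.
  intros [A HA] n. destruct n as [|n].
  - exists (fun _ _ => 0%nat). apply OS_competitive_empty. lra.
  - exists (packing_sorter A (S n)). apply packing_sorter_competitive; auto; lia.
Qed.
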